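(* Let $\mathcal{P}$ be the set of probability distributions on $(\{0,1\},2^{\{0,1\}})$, let $\dot{\mathcal{P}}\subseteq\mathcal{P}$, and let $\ddot{\mathcal{P}}=\{\ddot P_1,\dots,\ddot P_c\}\subseteq\mathcal{P}$. Let $P^+$ denote the combination of the distributions in $\ddot{\mathcal{P}}$ with truth constrained by $\dot{\mathcal{P}}$. Let $\dot{\mathcal{P}}_0=\{\dot P(\{0\}):\dot P\in\dot{\mathcal{P}}\}$ and let $\underline{\ddot P},\overline{\ddot P}\in\mathcal{P}$ satisfy $$\underline{\ddot P}(\{0\})=\min_{i\in\{1,\dots,c\}:\ddot P_i(\{0\})\in\dot{\mathcal{P}}_0}\ddot P_i(\{0\}),\qquad \overline{\ddot P}(\{0\})=\max_{i\in\{1,\dots,c\}:\ddot P_i(\{0\})\in\dot{\mathcal{P}}_0}\ddot P_i(\{0\}).$$ If $\ddot P_i(\{0\})\in\dot{\mathcal{P}}_0$ for some $i\in\{1,\dots,c\}$, then $P^+=w^+\underline{\ddot P}+(1-w^+)\overline{\ddot P}$, where $$w^+=\arg\sup_{w\in[0,1]}\Big(w\,D\big(\underline{\ddot P}\,\|\,w\underline{\ddot P}+(1-w)\overline{\ddot P}\big)+(1-w)\,D\big(\overline{\ddot P}\,\|\,w\underline{\ddot P}+(1-w)\overline{\ddot P}\big)\Big).$$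
   Context: $D(P\|Q)=\sum_{i\in\{0,1\}}P(\{i\})\log\frac{P(\{i\})}{Q(\{i\})}$ (with $0\log0=0$, $0\log(0/0)=0$); $D(P'\|P''\rightsquigarrow Q)=D(P'\|P'')-D(P'\|Q)$. Game: $U(\dot P,P_1,P_2)=\langle -D(\dot P\|P_2),D(\dot P\|P_1\rightsquigarrow P_2)\rangle$, ordered lexicographically ($u\preceq v$ iff $u_1<v_1$, or $u_1=v_1$ and $u_2\le v_2$). For $Q\in\mathcal{P}$, $\mathcal{P}_Q=\arg\sup^{\preceq}_{\langle P',P''\rangle\in\dot{\mathcal{P}}\times\ddot{\mathcal{P}}}U(P',Q,P'')$, and the combination of the distributions in $\ddot{\mathcal{P}}$ with truth constrained by $\dot{\mathcal{P}}$ is $P^+=\arg\sup^{\preceq}_{Q\in\mathcal{P}:\langle\dot P_Q,\ddot P_Q\rangle\in\mathcal{P}_Q}U(\dot P_Q,\ddot P_Q,Q)$. *)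

From HB Require Import structures.
From mathcomp Require Import all_boot all_order all_algebra.
From mathcomp Require Import all_classical all_reals all_analysis.
Set Implicit Arguments. Unset Strict Implicit. Unset Printing Implicit Defensive.
Import Order.TTheory GRing.Theory Num.Theory.
Local Open Scope classical_set_scope.
Local Open Scope ring_scope.

Section Defs.
Variable R : realType.

(* A probability distribution on ({0,1}, 2^{0,1}) is given by its point
   masses P i = P({i}), i : 'I_2. *)
Definition is_dist (P : 'I_2 -> R) : Prop :=
  (forall i, 0 <= P i) /\ \sum_(i < 2) P i = 1.

Definition klterm (p q : R) : \bar R :=
  if p == 0 then 0%E else if q == 0 then +oo%E else (p * ln (p / q))%:E.

Definition KL (P Q : 'I_2 -> R) : \bar R := (\sum_(i < 2) klterm (P i) (Q i))%E.

Definition KLto (P' P'' Q : 'I_2 -> R) : \bar R := (KL P' P'' - KL P' Q)%E.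

Definition Ugame (Pd P1 P2 : 'I_2 -> R) : \bar R * \bar R :=
  ((- KL Pd P2)%E, KLto Pd P1 P2).

Definition lexle (u v : \bar R * \bar R) : Prop :=
  (u.1 < v.1)%E \/ (u.1 = v.1 /\ (u.2 <= v.2)%E).

Definition lexargsup (T : Type) (A : set T) (f : T -> \bar R * \bar R) : set T :=
  [set x | A x /\ forall y, A y -> lexle (f y) (f x)].

Definition bestresp (Pdot : set ('I_2 -> R)) (c : nat) (Pdd : 'I_c -> 'I_2 -> R)
  (Q : 'I_2 -> R) : set (('I_2 -> R) * ('I_2 -> R)) :=
  lexargsup [set ab | Pdot ab.1 /\ exists i, ab.2 = Pdd i]
            (fun ab => Ugame ab.1 Q ab.2).

(* The set of combinations P^+: Q-components of the maximizers of
   U(Pd_Q, Pdd_Q, Q) over Q in \mathcal P and <Pd_Q, Pdd_Q> in \mathcal P_Q. *)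
Definition combination (Pdot : set ('I_2 -> R)) (c : nat) (Pdd : 'I_c -> 'I_2 -> R)
  : set ('I_2 -> R) :=
  [set Q | is_dist Q /\ exists a b, bestresp Pdot Pdd Q (a, b) /\
     forall Q' a' b', is_dist Q' -> bestresp Pdot Pdd Q' (a', b') ->
       lexle (Ugame a' b' Q') (Ugame a b Q)].

Definition Pdot0 (Pdot : set ('I_2 -> R)) : set R :=
  [set Pd ord0 | Pd in Pdot].

Definition mix (w : R) (P Q : 'I_2 -> R) : 'I_2 -> R :=
  fun i => w * P i + (1 - w) * Q i.

Definition wobj (Pl Ph : 'I_2 -> R) (w : R) : \bar R :=
  (w%:E * KL Pl (mix w Pl Ph) + (1 - w)%:E * KL Ph (mix w Pl Ph))%E.

End Defs.

From HB Require Import structures.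
From mathcomp Require Import all_boot all_order all_algebra.
From mathcomp Require Import all_classical all_reals all_analysis.
From mathcomp Require Import ring lra.
Import Order.TTheory GRing.Theory Num.Theory.
Local Open Scope classical_set_scope.
Local Open Scope ring_scope.

Set Implicit Arguments. Unset Strict Implicit.

(* First, the game collapses: against a fixed Q the truth player
   can always secure first component 0 by playing some admissible Pdd_i
   against itself, and among those the second component D(Pdd_i||Q) is
   largest at an extreme admissible mass, because D(.||Q) is convex.  Hence
   every best response has value -max(D(Pl||Q), D(Ph||Q)) in both components,
   and P^+ is the set of minimisers of this worst-case divergence.
   Second, the compensation identity
     w D(Pl||Q) + (1-w) D(Ph||Q)
       = w D(Pl||M_w) + (1-w) D(Ph||M_w) + D(M_w||Q),  M_w = w Pl + (1-w) Ph,
   bounds the worst case below by JS(w) + D(M_w||Q), where JS(w) is the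
   objective maximised by w+.  The first-order conditions at w+ make both
   D(Pl||M_w+) and D(Ph||M_w+) at most JS(w+), so M_w+ attains the bound and is
   the only minimiser. *)

Lemma big_ord2 (T : Type) (idx : T) (op : Monoid.law idx) (F : 'I_2 -> T) :
  \big[op/idx]_(i < 2) F i = op (F ord0) (F ord_max).
Proof. by rewrite big_ord_recr big_ord1; congr (op (F _) _); apply: val_inj. Qed.

Lemma ord2E (i : 'I_2) : i = ord0 \/ i = ord_max.
Proof. by case: i => [[|[|k]] Hi]; [left|right|]; try apply: val_inj. Qed.

Section BinaryDivergence.
Variable R : realType.
Implicit Types (x y p q r t w : R) (P Q : 'I_2 -> R).

Local Notation o1 := (@ord_max 1).

Lemma ln_le_sub1 x : 0 < x -> ln x <= x - 1.
Proof. by move=> x0; have := expR_ge1Dx (ln x); rewrite lnK ?posrE //; lra. Qed.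

Lemma ln_lt_sub1 x : 0 < x -> x != 1 -> ln x < x - 1.
Proof.
move=> x0 x1; have /expR_gt1Dx : ln x != 0 by rewrite ln_eq0.
rewrite lnK ?posrE //; lra.
Qed.

Lemma mul_ln_divxx x : x * ln (x / x) = 0.
Proof. by have [->|xn0] := eqVneq x 0; rewrite ?mul0r // divff // ln1 mulr0. Qed.

Lemma sub_lt_mul_ln_div x y : 0 <= x -> 0 < y -> x != y -> x - y < x * ln (x / y).
Proof.
move=> x0 y0 xy; have [x_0|xn0] := eqVneq x 0; first by rewrite x_0 mul0r; lra.
have xp : 0 < x by rewrite lt_neqAle eq_sym xn0.
have yx1 : y / x != 1.
  by apply/eqP => h; move: xy; rewrite -(divfK xn0 y) h mul1r eqxx.
have := ln_lt_sub1 (divr_gt0 y0 xp) yx1.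
rewrite -[x / y]invf_div lnV ?posrE ?divr_gt0 //.
have : x * (y / x) = y by rewrite mulrC divfK.
nra.
Qed.

Lemma sub_le_mul_ln_div x y : 0 <= x -> 0 < y -> x - y <= x * ln (x / y).
Proof.
move=> x0 y0; have [->|xy] := eqVneq x y; first by rewrite mul_ln_divxx subrr.
exact/ltW/sub_lt_mul_ln_div.
Qed.

Lemma mul_ln_div_le x y : 0 <= x -> 0 < y ->
  x * ln (x / y) <= x - y + (x - y) ^+ 2 / y.
Proof.
move=> x0 y0; have [->|xn0] := eqVneq x 0.
  by rewrite mul0r sub0r sqrrN expr2 mulrK ?unitfE ?gt_eqF //; lra.
have xp : 0 < x by rewrite lt_neqAle eq_sym xn0.
have -> : x - y + (x - y) ^+ 2 / y = x * (x / y - 1) by field; rewrite gt_eqF.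
have := ln_le_sub1 (divr_gt0 xp y0); nra.
Qed.

Lemma is_dist2 P : is_dist P -> 0 <= P ord0 <= 1 /\ P o1 = 1 - P ord0.
Proof.
case=> P_ge0; rewrite big_ord2 /= => P1.
have := P_ge0 ord0; have := P_ge0 o1 => P1_ge0 P0_ge0.
by split; [apply/andP; split|]; lra.
Qed.

Lemma eq_dist P Q : is_dist P -> is_dist Q -> P ord0 = Q ord0 -> P = Q.
Proof.
move=> /is_dist2[_ P1] /is_dist2[_ Q1] PQ0; apply: funext => i.
by case: (ord2E i) => ->; rewrite ?P1 ?Q1 PQ0.
Qed.

Lemma is_dist_mix w P Q : 0 <= w <= 1 -> is_dist P -> is_dist Q ->
  is_dist (mix w P Q).
Proof.
move=> /andP[w0 w1] [P_ge0 P1] [Q_ge0 Q1]; split.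
  by move=> i; rewrite /mix; have := P_ge0 i; have := Q_ge0 i; nra.
move: P1 Q1; rewrite !big_ord2 /= /mix => P1 Q1.
transitivity (w * (P ord0 + P o1) + (1 - w) * (Q ord0 + Q o1)); first ring.
by rewrite P1 Q1; ring.
Qed.

Lemma mixC w P Q : mix w P Q = mix (1 - w) Q P.
Proof. by apply: funext => i; rewrite /mix; ring. Qed.

Lemma KL_ord2 P Q :
  KL P Q = (klterm (P ord0) (Q ord0) + klterm (P o1) (Q o1))%E.
Proof. exact: big_ord2. Qed.

Lemma klterm_xx x : klterm x x = 0%E.
Proof. by rewrite /klterm; case: eqP => // _; rewrite mul_ln_divxx. Qed.

Lemma KL_self P : KL P P = 0%E.
Proof. by rewrite KL_ord2 !klterm_xx adde0. Qed.

Lemma klterm_gt_sub x y : 0 <= x -> 0 <= y -> x != y ->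
  ((x - y)%:E < klterm x y)%E.
Proof.
move=> x0 y0 xy; rewrite /klterm; have [x_0|xn0] := eqVneq x 0.
  by move: xy; rewrite x_0 sub0r EFinN oppe_lt0 lte_fin lt_neqAle y0 andbT.
have [y_0|yn0] := eqVneq y 0; first by rewrite ltey.
by rewrite lte_fin sub_lt_mul_ln_div // lt_neqAle eq_sym yn0.
Qed.

Lemma klterm_ge_sub x y : 0 <= x -> 0 <= y -> ((x - y)%:E <= klterm x y)%E.
Proof.
move=> x0 y0; have [->|xy] := eqVneq x y; first by rewrite klterm_xx subrr.
exact/ltW/klterm_gt_sub.
Qed.

Lemma KL_ge0 P Q : is_dist P -> is_dist Q -> (0 <= KL P Q)%E.
Proof.
move=> hP hQ; have [[_ P1] [_ Q1]] := (is_dist2 hP, is_dist2 hQ).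
case: hP hQ => [P_ge0 _] [Q_ge0 _]; rewrite KL_ord2.
apply: le_trans (leeD (klterm_ge_sub (P_ge0 ord0) (Q_ge0 ord0))
                      (klterm_ge_sub (P_ge0 o1) (Q_ge0 o1))).
by rewrite -EFinD lee_fin P1 Q1; lra.
Qed.

Lemma KL_eq0 P Q : is_dist P -> is_dist Q -> KL P Q = 0%E -> P = Q.
Proof.
move=> hP hQ KL0; apply: eq_dist => //.
have [//|PQ0] := eqVneq (P ord0) (Q ord0).
have [[_ P1] [_ Q1]] := (is_dist2 hP, is_dist2 hQ).
case: hP hQ => [P_ge0 _] [Q_ge0 _].
have := @lte_leD _ _ (_ - _)%:E _ _ isT (klterm_gt_sub (P_ge0 ord0) (Q_ge0 ord0) PQ0)
                (klterm_ge_sub (P_ge0 o1) (Q_ge0 o1)).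
by rewrite -KL_ord2 KL0 -EFinD lte_fin P1 Q1; lra.
Qed.

Lemma klterm_neqNy x y : klterm x y != -oo%E.
Proof. by rewrite /klterm; case: ifP => // _; case: ifP. Qed.

Lemma KL_eqy0 P Q : Q ord0 = 0 -> 0 < P ord0 -> KL P Q = +oo%E.
Proof.
by move=> Q0 P0; rewrite KL_ord2 {1}/klterm Q0 eqxx gt_eqF //= addye ?klterm_neqNy.
Qed.

Lemma KL_eqy1 P Q : is_dist P -> is_dist Q -> Q ord0 = 1 -> P ord0 < 1 ->
  KL P Q = +oo%E.
Proof.
move=> /is_dist2[_ P1] /is_dist2[_ Q1] Q0 P0.
rewrite KL_ord2 [X in (_ + X)%E]/klterm P1 Q1 Q0 subrr eqxx.
have -> : (1 - P ord0 == 0) = false by apply/negbTE/eqP; lra.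
by rewrite addey ?klterm_neqNy.
Qed.

(* The binary divergence of the masses at 0; it agrees with [KL] whenever the
   latter is finite (see [KL_kl]). *)
Definition kl p q := p * ln (p / q) + (1 - p) * ln ((1 - p) / (1 - q)).

Lemma kl_self p : kl p p = 0.
Proof. by rewrite /kl !mul_ln_divxx addr0. Qed.

Lemma klterm_fin x y : x = 0 \/ y != 0 -> klterm x y = (x * ln (x / y))%:E.
Proof.
rewrite /klterm; case=> [->|yn0]; first by rewrite eqxx mul0r.
by case: eqP => [->|_]; rewrite ?mul0r // (negbTE yn0).
Qed.

Lemma KL_kl P Q : is_dist P -> is_dist Q ->
  (Q ord0 = 0 -> P ord0 = 0) -> (Q ord0 = 1 -> P ord0 = 1) ->
  KL P Q = (kl (P ord0) (Q ord0))%:E.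
Proof.
move=> /is_dist2[_ P1] /is_dist2[_ Q1] abs0 abs1.
rewrite KL_ord2 P1 Q1 !klterm_fin //.
  have [Q_1|Qn1] := eqVneq (Q ord0) 1; first by left; rewrite abs1 // subrr.
  by right; apply: contra_neq Qn1; lra.
by have [/abs0|] := eqVneq (Q ord0) 0; [left|right].
Qed.

Lemma KL_kl_interior P Q : is_dist P -> is_dist Q -> 0 < Q ord0 < 1 ->
  KL P Q = (kl (P ord0) (Q ord0))%:E.
Proof. by move=> hP hQ /andP[Q0 Q1]; apply: KL_kl => // e; move: Q0 Q1; rewrite e; lra. Qed.

Lemma kl_gt0 p q : 0 <= p <= 1 -> 0 < q < 1 -> p != q -> 0 < kl p q.
Proof.
move=> /andP[p0 p1] /andP[q0 q1] pq.
have := sub_lt_mul_ln_div p0 q0 pq.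
have : (1 - p) - (1 - q) <= (1 - p) * ln ((1 - p) / (1 - q)).
  by apply: sub_le_mul_ln_div; lra.
rewrite /kl; lra.
Qed.

Lemma kl_ge0 p q : 0 <= p <= 1 -> 0 < q < 1 -> 0 <= kl p q.
Proof.
by move=> hp hq; have [->|pq] := eqVneq p q; [rewrite kl_self | exact/ltW/kl_gt0].
Qed.

Lemma kl_le_chi2 p q : 0 <= p <= 1 -> 0 < q < 1 ->
  kl p q <= (p - q) ^+ 2 / q + (p - q) ^+ 2 / (1 - q).
Proof.
move=> /andP[p0 p1] /andP[q0 q1]; have := mul_ln_div_le p0 q0.
have := @mul_ln_div_le (1 - p) (1 - q) (ltac:(lra)) (ltac:(lra)).
rewrite (_ : (1 - p - (1 - q)) ^+ 2 = (p - q) ^+ 2) /kl; [lra | ring].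
Qed.

Lemma mul_ln_div_split a x m q : 0 <= a -> 0 <= x -> 0 < q ->
  (0 < a -> 0 < x -> 0 < m) ->
  a * (x * ln (x / q)) = a * (x * ln (x / m)) + a * x * ln (m / q).
Proof.
move=> a0 x0 q0 m_gt0.
have [->|an0] := eqVneq a 0; first by rewrite !mul0r addr0.
have [->|xn0] := eqVneq x 0; first by rewrite !(mul0r, mulr0) addr0.
have ap : 0 < a by rewrite lt_neqAle eq_sym an0.
have xp : 0 < x by rewrite lt_neqAle eq_sym xn0.
by rewrite !ln_div ?posrE ?m_gt0 //; ring.
Qed.

Lemma mul_ln_div_compensation w x z q : 0 <= w <= 1 -> 0 <= x -> 0 <= z -> 0 < q ->
  let m := w * x + (1 - w) * z in
  w * (x * ln (x / q)) + (1 - w) * (z * ln (z / q)) =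
  w * (x * ln (x / m)) + (1 - w) * (z * ln (z / m)) + m * ln (m / q).
Proof.
move=> /andP[w0 w1] x0 z0 q0 m.
have mx : 0 < w -> 0 < x -> 0 < m.
  by move=> wp xp; apply: lt_le_trans (mulr_gt0 wp xp) _; rewrite /m; nra.
have mz : 0 < 1 - w -> 0 < z -> 0 < m.
  by move=> wp zp; apply: lt_le_trans (mulr_gt0 wp zp) _; rewrite /m; nra.
rewrite (mul_ln_div_split w0 x0 q0 mx) (mul_ln_div_split _ z0 q0 mz); last lra.
rewrite /m; ring.
Qed.

Lemma kl_compensation w x z q : 0 <= w <= 1 -> 0 <= x <= 1 -> 0 <= z <= 1 ->
  0 < q < 1 ->
  let m := w * x + (1 - w) * z in
  w * kl x q + (1 - w) * kl z q = w * kl x m + (1 - w) * kl z m + kl m q.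
Proof.
move=> hw /andP[x0 x1] /andP[z0 z1] /andP[q0 q1] m.
have := mul_ln_div_compensation hw x0 z0 q0.
have := @mul_ln_div_compensation w (1 - x) (1 - z) (1 - q) hw
  (ltac:(lra)) (ltac:(lra)) (ltac:(lra)).
rewrite (_ : w * (1 - x) + (1 - w) * (1 - z) = 1 - m) /= -/m; last by rewrite /m; ring.
rewrite /kl !mulrDr; lra.
Qed.

Lemma mul_kl_mix_ge0 t p r : 0 <= t <= 1 -> 0 <= p <= 1 -> 0 <= r <= 1 ->
  0 <= t * kl p (t * p + (1 - t) * r).
Proof.
move=> /andP[t0 t1] hp /andP[r0 r1]; have /andP[p0 p1] := hp.
have [->|tn0] := eqVneq t 0; first by rewrite mul0r.
have tp : 0 < t by rewrite lt_neqAle eq_sym tn0.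
apply: mulr_ge0 => //; set m := _ + _.
have [m0|mn0] := eqVneq m 0.
  by rewrite m0 (_ : p = 0) ?kl_self //; move: m0; rewrite /m; nra.
have [m1|mn1] := eqVneq m 1.
  by rewrite m1 (_ : p = 1) ?kl_self //; move: m1; rewrite /m; nra.
apply: kl_ge0 => //; have m_ge0 : 0 <= m by rewrite /m; nra.
have m_le1 : m <= 1 by rewrite /m; nra.
by rewrite !lt_neqAle eq_sym mn0 mn1 m_ge0 m_le1.
Qed.

Lemma kl_convex t p r q : 0 <= t <= 1 -> 0 <= p <= 1 -> 0 <= r <= 1 ->
  0 < q < 1 -> kl (t * p + (1 - t) * r) q <= t * kl p q + (1 - t) * kl r q.
Proof.
move=> ht hp hr hq; rewrite kl_compensation //.
have := mul_kl_mix_ge0 ht hp hr.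
have /andP[t0 t1] := ht.
have := @mul_kl_mix_ge0 (1 - t) r p (ltac:(apply/andP; lra)) hr hp.
rewrite (_ : (1 - t) * r + (1 - (1 - t)) * p = t * p + (1 - t) * r); [lra | ring].
Qed.

Lemma mix_le_max w a b : 0 <= w <= 1 -> w * a + (1 - w) * b <= Num.max a b.
Proof. by move=> /andP[w0 w1]; rewrite le_max; case: (lerP a b) => ab; nra. Qed.

Lemma mix_between p a r : p <= a <= r -> exists2 t, 0 <= t <= 1 & a = t * p + (1 - t) * r.
Proof.
move=> /andP[pa ar]; have [pr|npr] := eqVneq p r.
  by exists 1; [rewrite ler01 lexx | rewrite subrr mul0r addr0 mul1r; lra].
have rp : 0 < r - p by move: npr => /eqP; lra.
exists ((r - a) / (r - p)); last by field; rewrite gt_eqF.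
by rewrite divr_ge0 ?ler_pdivrMr /=; lra.
Qed.

Definition KLmax P1 P2 Q : \bar R := Order.max (KL P1 Q) (KL P2 Q).

Lemma KL_le_KLmax Pl Ph P Q : is_dist Pl -> is_dist Ph -> is_dist P -> is_dist Q ->
  Pl ord0 <= P ord0 <= Ph ord0 -> (KL P Q <= KLmax Pl Ph Q)%E.
Proof.
move=> hl hh hP hQ lPh; rewrite /KLmax.
have [/andP[p0 p1] _] := is_dist2 hl; have [/andP[r0 r1] _] := is_dist2 hh.
have [/andP[a0 a1] _] := is_dist2 hP; have [/andP[q0 q1] _] := is_dist2 hQ.
have [Q_0|Qn0] := eqVneq (Q ord0) 0.
  have [P_0|Pn0] := eqVneq (P ord0) 0; last first.
    by rewrite (@KL_eqy0 Ph) ?maxey ?leey //; move: lPh Pn0 => /andP[]; lra.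
  by rewrite (eq_dist hP hQ) ?P_0 ?Q_0 // KL_self le_max KL_ge0.
have [Q_1|Qn1] := eqVneq (Q ord0) 1.
  have [P_1|Pn1] := eqVneq (P ord0) 1; last first.
    by rewrite (@KL_eqy1 Pl) ?maxye ?leey //; move: lPh Pn1 => /andP[]; lra.
  by rewrite (eq_dist hP hQ) ?P_1 ?Q_1 // KL_self le_max KL_ge0.
have hq : 0 < Q ord0 < 1 by rewrite !lt_neqAle eq_sym Qn0 Qn1 q0 q1.
rewrite !KL_kl_interior // -EFin_max lee_fin.
have [t ht ->] := mix_between lPh.
by apply: le_trans (mix_le_max _ _ ht); apply: kl_convex => //; apply/andP.
Qed.

Definition jsd p r w :=
  w * kl p (w * p + (1 - w) * r) + (1 - w) * kl r (w * p + (1 - w) * r).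

Lemma jsd1 p r : jsd p r 1 = 0.
Proof. by rewrite /jsd subrr !mul0r !addr0 !mul1r kl_self. Qed.

Lemma jsd0 p r : jsd p r 0 = 0.
Proof. by rewrite /jsd subr0 !mul0r !add0r !mul1r kl_self. Qed.

Lemma mule_KL_mix w P Q : 0 <= w <= 1 -> is_dist P -> is_dist Q ->
  (w%:E * KL P (mix w P Q))%E = (w * kl (P ord0) (w * P ord0 + (1 - w) * Q ord0))%:E.
Proof.
move=> hw hP hQ; have /andP[w0 w1] := hw.
have [->|wn0] := eqVneq w 0; first by rewrite mul0e mul0r.
have wp : 0 < w by rewrite lt_neqAle eq_sym wn0.
have [/andP[p0 p1] _] := is_dist2 hP; have [/andP[q0 q1] _] := is_dist2 hQ.
have hM := is_dist_mix hw hP hQ.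
by rewrite KL_kl //= /mix => e; move: e; nra.
Qed.

Lemma wobj_jsd w Pl Ph : 0 <= w <= 1 -> is_dist Pl -> is_dist Ph ->
  wobj Pl Ph w = (jsd (Pl ord0) (Ph ord0) w)%:E.
Proof.
move=> hw hl hh; have /andP[w0 w1] := hw.
rewrite /wobj mule_KL_mix // [in X in (_ + X)%E]mixC mule_KL_mix //; last first.
  by apply/andP; lra.
by rewrite -EFinD /jsd; congr (_ + _ * kl _ _)%:E; ring.
Qed.

Lemma jsd_half_gt0 p r : 0 <= p -> p < r -> r <= 1 -> 0 < jsd p r (1 / 2).
Proof.
move=> p0 pr r1; rewrite /jsd; set m := 1 / 2 * p + _.
have hm : 0 < m < 1 by apply/andP; split; rewrite /m; lra.
have hp : 0 <= p <= 1 by apply/andP; split; lra.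
have hr : 0 <= r <= 1 by apply/andP; split; lra.
have := kl_ge0 hp hm; have := @kl_gt0 r m hr hm (ltac:(apply/eqP; rewrite /m; lra)).
lra.
Qed.

Lemma argmax_jsd_interior p r w : 0 <= p -> p < r -> r <= 1 -> 0 <= w <= 1 ->
  (forall w', 0 <= w' <= 1 -> jsd p r w' <= jsd p r w) ->
  0 < w * p + (1 - w) * r < 1.
Proof.
move=> p0 pr r1 /andP[w0 w1] jsd_max; set m := w * p + _.
have W_gt0 : 0 < jsd p r w.
  by apply: lt_le_trans (jsd_half_gt0 p0 pr r1) (jsd_max _ _); apply/andP; lra.
have [m0|mn0] := eqVneq m 0.
  by move: W_gt0; rewrite (_ : w = 1) ?jsd1 ?ltxx //; move: m0; rewrite /m; nra.
have [m1|mn1] := eqVneq m 1.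
  by move: W_gt0; rewrite (_ : w = 0) ?jsd0 ?ltxx //; move: m1; rewrite /m; nra.
have m_ge0 : 0 <= m by rewrite /m; nra.
have m_le1 : m <= 1 by rewrite /m; nra.
by rewrite !lt_neqAle eq_sym mn0 mn1 m_ge0 m_le1.
Qed.

Lemma argmax_jsd_first_order p r w w' : 0 <= p <= 1 -> 0 <= r <= 1 ->
  0 < w * p + (1 - w) * r < 1 ->
  (forall w', 0 <= w' <= 1 -> jsd p r w' <= jsd p r w) -> 0 <= w' <= 1 ->
  let m := w * p + (1 - w) * r in
  (w' - w) * (kl p m - kl r m) <=
  (w' - w) ^+ 2 * ((p - r) ^+ 2 / m + (p - r) ^+ 2 / (1 - m)).
Proof.
(* Compensation at q = m: moving the weight from w to w' changes the objective
   by (w' - w) (kl p m - kl r m) - kl m' m, and kl m' m is at most quadratic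
   in w' - w. *)
move=> hp hr hm jsd_max hw' /=; set m := w * p + _; have /andP[m0 m1] := hm.
have := kl_compensation hw' hp hr hm; rewrite /= -/m; set m' := w' * p + _ => comp.
have /andP[w'0 w'1] := hw'; have /andP[p0 p1] := hp; have /andP[r0 r1] := hr.
have hm' : 0 <= m' <= 1 by apply/andP; split; rewrite /m'; nra.
have := kl_le_chi2 hm' hm.
rewrite (_ : (m' - m) ^+ 2 / m + (m' - m) ^+ 2 / (1 - m) =
             (w' - w) ^+ 2 * ((p - r) ^+ 2 / m + (p - r) ^+ 2 / (1 - m))).
  by have := jsd_max _ hw'; rewrite /jsd -/m' -/m; lra.
by rewrite /m' /m; field; apply/andP; split; apply/eqP; lra.
Qed.

Lemma le0_of_first_order (d K e0 : R) : 0 <= K -> 0 < e0 ->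
  (forall e, 0 < e -> e <= e0 -> e * d <= e ^+ 2 * K) -> d <= 0.
Proof.
move=> K0 e00 fo; rewrite leNgt; apply/negP => d0.
have K1 : 0 < K + 1 by lra.
pose e := Num.min e0 (d / (K + 1)).
have ep : 0 < e by rewrite lt_min e00 divr_gt0.
have e_le : e <= e0 by rewrite ge_min lexx.
have := fo e ep e_le.
have : e * (K + 1) <= d by rewrite -ler_pdivlMr // ge_min lexx orbT.
rewrite expr2; nra.
Qed.

Lemma argmax_jsd_kl_le p r w : 0 <= p -> p < r -> r <= 1 -> 0 <= w <= 1 ->
  (forall w', 0 <= w' <= 1 -> jsd p r w' <= jsd p r w) ->
  let m := w * p + (1 - w) * r in kl p m <= jsd p r w /\ kl r m <= jsd p r w.
Proof.
move=> p0 pr r1 hw jsd_max /=; set m := w * p + _; have /andP[w0 w1] := hw.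
have hp : 0 <= p <= 1 by apply/andP; split; lra.
have hr : 0 <= r <= 1 by apply/andP; split; lra.
have hm : 0 < m < 1 := argmax_jsd_interior p0 pr r1 hw jsd_max.
have /andP[m0 m1] := hm.
have fo w' (hw' : 0 <= w' <= 1) := argmax_jsd_first_order hp hr hm jsd_max hw'.
rewrite /= -/m in fo; set K := (_ / m + _) in fo.
have K0 : 0 <= K by apply: addr_ge0; apply: divr_ge0; rewrite ?sqr_ge0 //; lra.
have AB : w < 1 -> kl p m <= kl r m.
  move=> w_lt1; rewrite -subr_le0; apply: (le0_of_first_order K0 (_ : 0 < 1 - w)).
    by lra.
  move=> e e0 e1; have := fo (w + e) (ltac:(apply/andP; split; lra)).
  by rewrite (_ : w + e - w = e) //; ring.
have BA : 0 < w -> kl r m <= kl p m.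
  move=> w_gt0; rewrite -subr_le0; apply: (le0_of_first_order K0 w_gt0).
  move=> e e0 e1; have := fo (w - e) (ltac:(apply/andP; split; lra)).
  by rewrite (_ : w - e - w = - e) ?sqrrN; [rewrite mulNr -mulrN opprB | ring].
rewrite /jsd -/m; split.
  by have [->|/eqP ?] := eqVneq w 1; [lra | have := AB (ltac:(lra)); nra].
by have [->|/eqP ?] := eqVneq w 0; [lra | have := BA (ltac:(lra)); nra].
Qed.

Lemma jsd_add_kl_le_max p r w q : 0 <= p <= 1 -> 0 <= r <= 1 -> 0 <= w <= 1 ->
  0 < q < 1 -> jsd p r w + kl (w * p + (1 - w) * r) q <= Num.max (kl p q) (kl r q).
Proof.
move=> hp hr hw hq; have := kl_compensation hw hp hr hq; rewrite /= => comp.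
by rewrite /jsd -comp; exact: mix_le_max.
Qed.

Definition KLmax_minimizers P1 P2 : set ('I_2 -> R) :=
  [set Q | is_dist Q /\ forall Q', is_dist Q' -> (KLmax P1 P2 Q <= KLmax P1 P2 Q')%E].

Lemma KLmax_mix_le_jsd Pl Ph w : is_dist Pl -> is_dist Ph -> Pl ord0 < Ph ord0 ->
  0 <= w <= 1 ->
  (forall w', 0 <= w' <= 1 -> jsd (Pl ord0) (Ph ord0) w' <= jsd (Pl ord0) (Ph ord0) w) ->
  (KLmax Pl Ph (mix w Pl Ph) <= (jsd (Pl ord0) (Ph ord0) w)%:E)%E.
Proof.
move=> hl hh lh hw jsd_max.
have [/andP[p0 _] _] := is_dist2 hl; have [/andP[_ r1] _] := is_dist2 hh.
have hM := is_dist_mix hw hl hh.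
have hm := argmax_jsd_interior p0 lh r1 hw jsd_max.
have [Al Ah] := argmax_jsd_kl_le p0 lh r1 hw jsd_max.
by rewrite /KLmax ge_max !KL_kl_interior // !lee_fin Al Ah.
Qed.

Lemma jsd_lt_KLmax Pl Ph w Q : is_dist Pl -> is_dist Ph -> Pl ord0 < Ph ord0 ->
  0 <= w <= 1 -> is_dist Q -> Q <> mix w Pl Ph ->
  ((jsd (Pl ord0) (Ph ord0) w)%:E < KLmax Pl Ph Q)%E.
Proof.
move=> hl hh lh hw hQ QM; have /andP[w0 w1] := hw.
have [hp _] := is_dist2 hl; have [hr _] := is_dist2 hh.
have [/andP[q0 q1] _] := is_dist2 hQ.
have [Q_0|Qn0] := eqVneq (Q ord0) 0.
  by rewrite /KLmax (@KL_eqy0 Ph) ?maxey ?ltey //; move: hp => /andP[]; lra.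
have [Q_1|Qn1] := eqVneq (Q ord0) 1.
  by rewrite /KLmax (@KL_eqy1 Pl) ?maxye ?ltey //; move: hr => /andP[]; lra.
have hq : 0 < Q ord0 < 1 by rewrite !lt_neqAle eq_sym Qn0 Qn1 q0 q1.
have hM := is_dist_mix hw hl hh.
have [hm _] := is_dist2 hM.
have mQ : w * Pl ord0 + (1 - w) * Ph ord0 != Q ord0.
  by apply/eqP => e; apply: QM; apply: eq_dist.
rewrite /KLmax !KL_kl_interior // -EFin_max lte_fin.
by apply: lt_le_trans (jsd_add_kl_le_max hp hr hw hq); rewrite ltrDl kl_gt0.
Qed.

Lemma KLmax_minimizersE Pl Ph w : is_dist Pl -> is_dist Ph -> Pl ord0 <= Ph ord0 ->
  0 <= w <= 1 -> (forall w', 0 <= w' <= 1 -> (wobj Pl Ph w' <= wobj Pl Ph w)%E) ->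
  KLmax_minimizers Pl Ph = [set mix w Pl Ph].
Proof.
move=> hl hh lh hw wobj_max; have hM := is_dist_mix hw hl hh.
have [e|ne] := eqVneq (Pl ord0) (Ph ord0).
  have <- : Pl = Ph := eq_dist hl hh e.
  have -> : mix w Pl Pl = Pl by apply/funext => i; rewrite /mix; ring.
  apply/seteqP; split => Q /=.
    case=> hQ Qmin; apply/esym/KL_eq0 => //; apply/eqP; rewrite eq_le KL_ge0 // andbT.
    by have := Qmin _ hl; rewrite /KLmax !maxxx KL_self.
  by move=> ->; split => // Q' hQ'; rewrite /KLmax !maxxx KL_self KL_ge0.
have lh' : Pl ord0 < Ph ord0 by rewrite lt_neqAle ne.
have jsd_max w' : 0 <= w' <= 1 -> jsd (Pl ord0) (Ph ord0) w' <= jsd (Pl ord0) (Ph ord0) w.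
  by move=> hw'; have := wobj_max _ hw'; rewrite !wobj_jsd.
have Mle := KLmax_mix_le_jsd hl hh lh' hw jsd_max.
apply/seteqP; split => Q /=.
  case=> hQ Qmin; apply: contrapT => QM.
  by have := lt_le_trans (jsd_lt_KLmax hl hh lh' hw hQ QM) (le_trans (Qmin _ hM) Mle); rewrite ltxx.
move=> ->; split => // Q' hQ'; have [->//|QM] := pselect (Q' = mix w Pl Ph).
exact: le_trans Mle (ltW (jsd_lt_KLmax hl hh lh' hw hQ' QM)).
Qed.

Section Game.
Variables (Pdot : set ('I_2 -> R)) (c : nat) (Pdd : 'I_c -> 'I_2 -> R).
Variables Pl Ph : 'I_2 -> R.
Hypothesis Pdot_dist : Pdot `<=` @is_dist R.
Hypothesis Pdd_dist : forall i, is_dist (Pdd i).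
Hypothesis Pl_adm : exists2 i, Pdot0 Pdot (Pdd i ord0) & Pl = Pdd i.
Hypothesis Ph_adm : exists2 i, Pdot0 Pdot (Pdd i ord0) & Ph = Pdd i.
Hypothesis KL_le_KLmax_adm : forall i Q, Pdot0 Pdot (Pdd i ord0) -> is_dist Q ->
  (KL (Pdd i) Q <= KLmax Pl Ph Q)%E.

Lemma Pdot_Pdd i : Pdot0 Pdot (Pdd i ord0) -> Pdot (Pdd i).
Proof. by case=> P hP e; rewrite -(eq_dist (Pdot_dist hP) (Pdd_dist i) e). Qed.

Lemma Pdot0_Pdd P i : Pdot P -> P = Pdd i -> Pdot0 Pdot (Pdd i ord0).
Proof. by move=> hP e; exists P => //; rewrite e. Qed.

Lemma KLmax_adm Q : exists2 i, Pdot0 Pdot (Pdd i ord0) & KL (Pdd i) Q = KLmax Pl Ph Q.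
Proof.
case: Pl_adm Ph_adm => il ail -> [ih aih ->].
by rewrite /KLmax maxEle; case: ifP => _; [exists ih | exists il].
Qed.

Lemma bestresp_Ugame Q a b : is_dist Q -> bestresp Pdot Pdd Q (a, b) ->
  Ugame a b Q = ((- KLmax Pl Ph Q)%E, (- KLmax Pl Ph Q)%E).
Proof.
move=> hQ [[/= ha [i hb]] br_max].
have da := Pdot_dist ha; have db : is_dist b by rewrite hb.
have adm j : Pdot0 Pdot (Pdd j ord0) -> Pdot (Pdd j) /\ exists k, Pdd j = Pdd k.
  by move=> aj; split; [exact: Pdot_Pdd | exists j].
have [il ail _] := Pl_adm.
have := br_max (Pdd il, Pdd il) (adm _ ail); rewrite /lexle /= KL_self oppe0.
case=> [|[KLab0 _]]; first by rewrite oppe_gt0 ltNge KL_ge0.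
have eab : a = b by apply: KL_eq0 => //; apply: oppe_inj; rewrite -KLab0 oppe0.
rewrite -eab in hb br_max *.
rewrite /Ugame /KLto KL_self sub0e; suff -> : KL a Q = KLmax Pl Ph Q by [].
have [j aj KLj] := KLmax_adm Q; apply/eqP; rewrite eq_le; apply/andP; split.
  by rewrite {1}hb; exact: KL_le_KLmax_adm (Pdot0_Pdd ha hb) hQ.
have := br_max (Pdd j, Pdd j) (adm _ aj).
rewrite /lexle /= !KL_self oppe0 /KLto !KL_self !sube0 -KLj.
by case=> [|[_ //]]; rewrite ltxx.
Qed.

Lemma exists_bestresp Q : is_dist Q -> exists j, bestresp Pdot Pdd Q (Pdd j, Pdd j).
Proof.
move=> hQ; have [j aj KLj] := KLmax_adm Q.
exists j; split; first by split; [exact: Pdot_Pdd | exists j].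
case=> a b [/= ha [k hb]]; have da := Pdot_dist ha; have db : is_dist b by rewrite hb.
rewrite /lexle /= KL_self oppe0 /KLto KL_self sube0.
have := KL_ge0 da db; rewrite le_eqVlt => /orP[/eqP KLab0|]; last by left; rewrite oppe_lt0.
right; split; first by rewrite -KLab0 oppe0.
have eab : a = b by apply: KL_eq0 => //; rewrite -KLab0.
rewrite -KLab0 sube0 KLj eab hb.
exact: KL_le_KLmax_adm (Pdot0_Pdd ha (etrans eab hb)) hQ.
Qed.

Lemma combinationE : combination Pdot Pdd = KLmax_minimizers Pl Ph.
Proof.
apply/seteqP; split => Q /=.
  case=> hQ [a [b [br comb_max]]]; split => // Q' hQ'.
  have [j bj] := exists_bestresp hQ'; have := comb_max Q' _ _ hQ' bj.
  rewrite (bestresp_Ugame hQ' bj) (bestresp_Ugame hQ br) /lexle /=.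
  by case=> [|[e _]]; [rewrite lteN2 => /ltW | rewrite (oppe_inj e)].
case=> hQ Qmin; split => //.
have [j bj] := exists_bestresp hQ; exists (Pdd j), (Pdd j); split => // Q' a b hQ' br.
rewrite (bestresp_Ugame hQ' br) (bestresp_Ugame hQ bj) /lexle /=.
have := Qmin Q' hQ'; rewrite le_eqVlt => /orP[/eqP->|lt]; first by right.
by left; rewrite lteN2.
Qed.

End Game.

End BinaryDivergence.

Theorem corollary6 (R : realType) (Pdot : set ('I_2 -> R)) (c : nat)
    (Pdd : 'I_c -> 'I_2 -> R) (Pl Ph : 'I_2 -> R) (wplus : R) :
  Pdot `<=` @is_dist R ->
  (forall i, is_dist (Pdd i)) ->
  is_dist Pl -> is_dist Ph ->
  (exists2 i, Pdot0 Pdot (Pdd i ord0) & Pl ord0 = Pdd i ord0) ->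
  (forall i, Pdot0 Pdot (Pdd i ord0) -> Pl ord0 <= Pdd i ord0) ->
  (exists2 i, Pdot0 Pdot (Pdd i ord0) & Ph ord0 = Pdd i ord0) ->
  (forall i, Pdot0 Pdot (Pdd i ord0) -> Pdd i ord0 <= Ph ord0) ->
  (exists i, Pdot0 Pdot (Pdd i ord0)) ->
  0 <= wplus <= 1 ->
  (forall w, 0 <= w <= 1 -> (wobj Pl Ph w <= wobj Pl Ph wplus)%E) ->
  combination Pdot Pdd = [set mix wplus Pl Ph].
Proof.
move=> Pdot_dist Pdd_dist hl hh [il ail eil] Pl_min [ih aih eih] Ph_max _ hw wobj_max.
have Pl_adm : exists2 i, Pdot0 Pdot (Pdd i ord0) & Pl = Pdd i.
  by exists il => //; apply: eq_dist.
have Ph_adm : exists2 i, Pdot0 Pdot (Pdd i ord0) & Ph = Pdd i.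
  by exists ih => //; apply: eq_dist.
have KL_le_KLmax_adm i Q : Pdot0 Pdot (Pdd i ord0) -> is_dist Q ->
    (KL (Pdd i) Q <= KLmax Pl Ph Q)%E.
  by move=> ai hQ; apply: KL_le_KLmax => //; rewrite Pl_min ?Ph_max.
rewrite (combinationE Pdot_dist Pdd_dist Pl_adm Ph_adm KL_le_KLmax_adm).
by apply: KLmax_minimizersE => //; rewrite eih Pl_min.
Qed.
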